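(* Let $\lambda\in\mathbb{R}\setminus\Sigma_0$. Then $\lambda\in\bigcup_{\Theta\in[-\pi,\pi]^2}\sigma(\mathcal{A}^\Theta)$ (i.e. $\lambda\in\sigma(\mathcal A)$) if and only if there exists $(\theta_1,\theta_2)\in[-\pi,\pi]^2$ such that $$(1\ \ \rho)\,\mathbb{M}\begin{pmatrix}1\\0\end{pmatrix}-\frac{\lambda m}{3a}\,(1\ \ \rho)\,\mathbb{M}\begin{pmatrix}\rho\\1\end{pmatrix}=\pm\frac{|S(\theta_1,\theta_2)|}{3},$$ equivalently $\mathcal{D}_1(\lambda)-\frac{\lambda m}{3a}\mathcal{D}_0(\lambda)=\pm|S(\theta_1,\theta_2)|/3$.
   Context: Fix $a>0$, $\kappa^{-1}\ge 0$, $m\ge 0$, $\rho:=a\kappa^{-1}$, and a real symmetric potential $q_0\in L^\infty(0,1)$, $q_0(x)=q_0(1-x)$. The hexagonal lattice $G$ (edges of length 1, identified with $[0,1]$, potential $q_0$ on each edge) carries the Hamiltonian $\mathcal A$: $u_e\mapsto -au_e''+q_0u_e$ with vertex conditions at each vertex $v$ ($\partial_nu_e(v)$ = outward derivative: $-u_e'(0)$ at $x=0$, $u_e'(1)$ at $x=1$): $u_e(v)+\rho\,\partial_nu_e(v)=\omega_v$ for all $e\ni v$ and $a\sum_{e\ni v}\partial_nu_e(v)=\lambda m\,\omega_v$. By Floquet–Bloch theory $\sigma(\mathcal A)=\bigcup_\Theta\sigma(\mathcal A^\Theta)$, where for $\Theta=(\theta_1,\theta_2)\in[-\pi,\pi]^2$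 a real $\lambda\in\sigma(\mathcal A^\Theta)$ iff there are $u_1,u_2,u_3\in H^2(0,1)$, $\omega_0,\omega_1\in\mathbb C$, not all zero, with $-au_j''+q_0u_j=\lambda u_j$, $u_j(0)-\rho u_j'(0)=\omega_0$ ($j=1,2,3$), $-a\sum_ju_j'(0)=\lambda m\omega_0$, $u_1(1)+\rho u_1'(1)=e^{i\theta_1}(u_2(1)+\rho u_2'(1))=e^{i\theta_2}(u_3(1)+\rho u_3'(1))=\omega_1$, $a(u_1'(1)+e^{i\theta_1}u_2'(1)+e^{i\theta_2}u_3'(1))=\lambda m\omega_1$. $S(\theta_1,\theta_2):=1+e^{-i\theta_1}+e^{-i\theta_2}$. $\Sigma_0$: set of real $\lambda$ for which $-au''+q_0u=\lambda u$, $u(0)-\rho u'(0)=0$, $u(1)+\rho u'(1)=0$ has a nontrivial solution. Fundamental solutions: $c_\lambda,s_\lambda$ solve $-ay''+q_0y=\lambda y$ on $[0,1]$ with $c_\lambda(0)=1,c_\lambda'(0)=0,s_\lambda(0)=0,s_\lambda'(0)=1$; monodromy matrix $\mathbb M=\begin{pmatrix}c_\lambda(1)&s_\lambda(1)\\c_\lambda'(1)&s_\lambda'(1)\end{pmatrix}$. $\mathcal D_1(\lambda):=c_\lambda(1)+\rho c_\lambda'(1)$, $\mathcal D_2(\lambda):=s_\lambda(1)+\rho s_\lambda'(1)$, $\mathcal D_0(\lambda):=\mathcal D_2(\lambda)+\rho\mathcal D_1(\lambda)$. *)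

From HB Require Import structures.
From mathcomp Require Import all_boot all_order all_algebra.
From mathcomp Require Import all_classical all_reals all_analysis.
From mathcomp Require Import complex.
Set Implicit Arguments. Unset Strict Implicit. Unset Printing Implicit Defensive.
Import Order.TTheory GRing.Theory Num.Theory.
Import numFieldNormedType.Exports.
Local Open Scope classical_set_scope.
Local Open Scope ring_scope.

Section Defs.
Context {R : realType}.

(* [is_sol a q lam y p]: y is a (real, H^2) solution of  -a y'' + q y = lam y
   on [0,1], with p = y'.  Written in the standard integrated form
   y(x) = y(0) + int_0^x p,  p(x) = p(0) + int_0^x (q - lam)/a * y,
   which is equivalent to y in H^2(0,1) and the equation holding a.e. *)
Definition is_sol (a : R) (q : R -> R) (lam : R) (y p : R -> R) : Prop :=
  {within `[0, 1], continuous y} /\ {within `[0, 1], continuous p} /\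
  forall x : R, 0 <= x <= 1 ->
    y x = y 0 + Rintegral lebesgue_measure `[0, x] p /\
    p x = p 0 + Rintegral lebesgue_measure `[0, x] (fun t => (q t - lam) / a * y t).

Definition is_csol (a : R) (q : R -> R) (lam : R) (u up : R -> R[i]) : Prop :=
  is_sol a q lam (fun x => complex.Re (u x)) (fun x => complex.Re (up x)) /\
  is_sol a q lam (fun x => complex.Im (u x)) (fun x => complex.Im (up x)).

Definition expi (t : R) : R[i] := (cos t +i* sin t)%C.

Definition Sfun (th1 th2 : R) : R[i] := 1 + expi (- th1) + expi (- th2).

Definition in_spec_Theta (a rho m : R) (q : R -> R) (lam th1 th2 : R) : Prop :=
  exists (u1 p1 u2 p2 u3 p3 : R -> R[i]) (w0 w1 : R[i]),
    [/\ is_csol a q lam u1 p1, is_csol a q lam u2 p2 & is_csol a q lam u3 p3] /\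
    ~ ((forall x : R, 0 <= x <= 1 -> [/\ u1 x = 0, u2 x = 0 & u3 x = 0])
       /\ w0 = 0 /\ w1 = 0) /\
    [/\ u1 0 - rho%:C * p1 0 = w0, u2 0 - rho%:C * p2 0 = w0
      & u3 0 - rho%:C * p3 0 = w0]%C /\
    (- a%:C * (p1 0 + p2 0 + p3 0) = (lam * m)%:C * w0)%C /\
    [/\ u1 1 + rho%:C * p1 1 = w1,
        expi th1 * (u2 1 + rho%:C * p2 1) = w1
      & expi th2 * (u3 1 + rho%:C * p3 1) = w1]%C /\
    (a%:C * (p1 1 + expi th1 * p2 1 + expi th2 * p3 1) = (lam * m)%:C * w1)%C.

Definition in_spec (a rho m : R) (q : R -> R) (lam : R) : Prop :=
  exists th1 th2 : R, -pi <= th1 <= pi /\ -pi <= th2 <= pi /\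
    in_spec_Theta a rho m q lam th1 th2.

Definition in_Sigma0 (a rho : R) (q : R -> R) (lam : R) : Prop :=
  exists y p : R -> R, is_sol a q lam y p /\
    y 0 - rho * p 0 = 0 /\ y 1 + rho * p 1 = 0 /\
    exists x : R, 0 <= x <= 1 /\ y x != 0.

End Defs.

From HB Require Import structures.
From mathcomp Require Import all_boot all_order all_algebra.
From mathcomp Require Import all_classical all_reals all_analysis.
From mathcomp Require Import complex.
From mathcomp Require Import measurable_realfun ring lra.
Import Order.TTheory GRing.Theory Num.Theory.
Import numFieldNormedType.Exports.
Local Open Scope classical_set_scope.
Local Open Scope ring_scope.
Set Implicit Arguments. Unset Strict Implicit. Unset Printing Implicit Defensive.

(* Every solution on an edge is a combination al c + be s of the fundamental
   solutions, so the Floquet problem at Theta is a finite linear system in the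
   edge coefficients and the two vertex values w0, w1.  Reflecting x |-> 1 - x
   (q0 is symmetric) shows that the monodromy matrix has equal diagonal entries,
   and constancy of the Wronskian gives it determinant 1.  As D0 <> 0 (lambda is
   not in Sigma_0) the edge coefficients can be eliminated, leaving
   a S w1 = K w0, a conj(S) w0 = K w1 with K = 3 a D1 - lambda m D0; this has a
   nonzero solution iff K^2 = a^2 |S|^2.  Since q0 is only bounded and
   measurable, uniqueness for the initial value problem and constancy of the
   Wronskian are proved directly from the integral form of the equation. *)

Section BoundedMeasurable.
Context {R : realType}.
Local Notation mu := (@lebesgue_measure R).

Definition I01 : set R := `[0, 1].

Definition bounded_measurable (f : R -> R) :=
  measurable_fun I01 f /\ exists M : R, forall x, 0 <= x <= 1 -> `|f x| <= M.

Lemma I01P x : I01 x <-> 0 <= x <= 1.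
Proof. by rewrite /I01 /= in_itv. Qed.

Lemma bound_ge0 (f : R -> R) M : (forall x, 0 <= x <= 1 -> `|f x| <= M) -> 0 <= M.
Proof. by move=> h; apply: le_trans (h 0 _); rewrite ?lexx ?ler01. Qed.

Lemma bounded_measurable_integrable f (D : set (measurableTypeR R)) :
  bounded_measurable f -> measurable D -> D `<=` I01 -> mu.-integrable D (EFin \o f).
Proof.
move=> [mf [M hM]] mD DI.
have mI : measurable I01 by exact: measurable_itv.
apply: measurable_bounded_integrable => //.
- apply: (@le_lt_trans _ _ (mu I01)); first by apply: le_measure => //; rewrite inE.
  by rewrite /I01 lebesgue_measure_itv /= lte01 -EFinD ltry.
- exact: (measurable_funS mI DI mf).
- exists M; split; first by rewrite num_real.
  move=> N hN x Dx /=; apply: le_trans (ltW hN).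
  by apply: hM; apply/I01P; exact: DI.
Qed.

Lemma continuous_bounded_measurable f :
  {within I01, continuous f} -> bounded_measurable f.
Proof.
move=> cf; split.
  by apply: subspace_continuous_measurable_fun => //; exact: measurable_itv.
have [c1 _ h1] := EVT_max ler01 cf.
have [c2 _ h2] := EVT_min ler01 cf.
exists (`|f c1| + `|f c2|) => x x01.
have xi : x \in `[0, 1] by rewrite in_itv.
have := h1 _ xi; have := h2 _ xi.
case: (lerP 0 (f x)) => hx ? ?.
  rewrite ger0_norm //; apply: (le_trans (y := f c1)) => //.
  by apply: le_trans (ler_norm _) _; rewrite lerDl.
rewrite ltr0_norm //; apply: (le_trans (y := `|f c2|)); last by rewrite lerDr.
by rewrite -normrN; apply: le_trans (ler_norm _); rewrite lerN2.
Qed.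

Lemma bounded_measurableD f g : bounded_measurable f -> bounded_measurable g ->
  bounded_measurable (f \+ g).
Proof.
move=> [mf [M hM]] [mg [N hN]]; split; first exact: measurable_funD.
exists (M + N) => x hx; apply: le_trans (ler_normD _ _) _.
by apply: lerD; [apply: hM | apply: hN].
Qed.

Lemma bounded_measurableM f g : bounded_measurable f -> bounded_measurable g ->
  bounded_measurable (f \* g).
Proof.
move=> [mf [M hM]] [mg [N hN]]; split; first exact: measurable_funM.
exists (M * N) => x hx /=; rewrite normrM.
by apply: ler_pM => //; [apply: hM | apply: hN].
Qed.

Lemma bounded_measurable_cst k : bounded_measurable (fun _ => k).
Proof. by split; [exact: measurable_cst | exists `|k|]. Qed.

Lemma bounded_measurableZ k f : bounded_measurable f ->
  bounded_measurable (fun x => k * f x).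
Proof. exact: bounded_measurableM (bounded_measurable_cst k). Qed.

Lemma bounded_measurable_lin k1 k2 f g : bounded_measurable f -> bounded_measurable g ->
  bounded_measurable (fun x => k1 * f x + k2 * g x).
Proof. by move=> bf bg; apply: bounded_measurableD; apply: bounded_measurableZ. Qed.

Lemma itv_oc_sub01 (x x' : R) : 0 <= x -> x' <= 1 -> `]x, x'] `<=` I01.
Proof. move=> h0 h1 t; rewrite /I01 /= !in_itv /= => /andP[? ?]; apply/andP; split; lra. Qed.

Lemma itv_cc_sub01 (x x' : R) : 0 <= x -> x' <= 1 -> `[x, x'] `<=` I01.
Proof. move=> h0 h1 t; rewrite /I01 /= !in_itv /= => /andP[? ?]; apply/andP; split; lra. Qed.

Lemma itv_co_sub01 (x x' : R) : 0 <= x -> x' <= 1 -> `[x, x'[ `<=` I01.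
Proof. move=> h0 h1 t; rewrite /I01 /= !in_itv /= => /andP[? ?]; apply/andP; split; lra. Qed.

Lemma Rintegral0_itvB (f : R -> R) (x x' : R) : bounded_measurable f ->
  0 <= x -> x <= x' -> x' <= 1 ->
  Rintegral mu `[0, x'] f - Rintegral mu `[0, x] f = Rintegral mu `]x, x'] f.
Proof.
move=> bf h0 h1 h2; apply: Rintegral_itvB; rewrite ?bnd_simp //.
by apply: bounded_measurable_integrable => //; apply: itv_cc_sub01.
Qed.

Lemma lebesgue_measure_itv_oc (x x' : R) : x <= x' -> fine (mu `]x, x']) = x' - x.
Proof.
move=> h1; rewrite lebesgue_measure_itv /=.
case: ltP => //; rewrite lee_fin => hx.
have -> : x' = x by apply/eqP; rewrite eq_le h1 hx.
by rewrite subrr.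
Qed.

Lemma norm_Rintegral_oc_le (f : R -> R) (x x' E : R) : bounded_measurable f ->
  0 <= x -> x <= x' -> x' <= 1 -> 0 <= E ->
  (forall t, x < t <= x' -> `|f t| <= E) ->
  `|Rintegral mu `]x, x'] f| <= (x' - x) * E.
Proof.
move=> bf h0 h1 h2 hE hb.
have mD : measurable (`]x, x'] : set (measurableTypeR R)) by exact: measurable_itv.
have intf := bounded_measurable_integrable bf mD (itv_oc_sub01 h0 h2).
apply: (le_trans (le_normr_Rintegral mD intf)).
have iE : mu.-integrable `]x, x'] (EFin \o (fun=> E)).
  by apply: bounded_measurable_integrable => //;
    [exact: bounded_measurable_cst | exact: itv_oc_sub01].
apply: (@le_trans _ _ (Rintegral mu `]x, x'] (fun=> E))).
  apply: (le_Rintegral mD (integrable_abse intf) iE) => t.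
  by rewrite /= in_itv /= => /hb.
by rewrite Rintegral_cst // lebesgue_measure_itv_oc // mulrC.
Qed.

Lemma Rintegral_lin (f g : R -> R) (D : set (measurableTypeR R)) k1 k2 :
  bounded_measurable f -> bounded_measurable g -> measurable D -> D `<=` I01 ->
  Rintegral mu D (fun t => k1 * f t + k2 * g t) =
  k1 * Rintegral mu D f + k2 * Rintegral mu D g.
Proof.
move=> bf bg mD DI.
rewrite RintegralD //; last 2 first.
- by apply: bounded_measurable_integrable => //; apply: bounded_measurableZ.
- by apply: bounded_measurable_integrable => //; apply: bounded_measurableZ.
by rewrite !RintegralZl //; apply: bounded_measurable_integrable.
Qed.

Lemma Rintegral_oc_lin (f g : R -> R) (x x' k1 k2 : R) :
  bounded_measurable f -> bounded_measurable g -> 0 <= x -> x' <= 1 ->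
  Rintegral mu `]x, x'] (fun t => k1 * f t + k2 * g t) =
  k1 * Rintegral mu `]x, x'] f + k2 * Rintegral mu `]x, x'] g.
Proof.
move=> bf bg x0 x1.
have mD : measurable (`]x, x'] : set (measurableTypeR R)) by exact: measurable_itv.
exact: Rintegral_lin bf bg mD (itv_oc_sub01 x0 x1).
Qed.

End BoundedMeasurable.

Section RealEstimates.
Context {R : realType}.

Lemma eq0_of_nat_mul_le (v K : R) : (forall n : nat, n%:R * `|v| <= K) -> v = 0.
Proof.
move=> h; apply/eqP; apply/negPn/negP => hv.
have v0 : 0 < `|v| by rewrite normr_gt0.
have K0 : 0 <= K by have := h 0%N; rewrite mul0r.
have := archi_boundP (divr_ge0 K0 (ltW v0)).
rewrite ltr_pdivrMr // => h1.
have := h (Num.Def.archi_bound (K / `|v|)); lra.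
Qed.

Lemma eq0_of_le_div_exp2 (v B : R) : (forall n : nat, `|v| <= B / 2 ^+ n) -> v = 0.
Proof.
move=> h; apply: (@eq0_of_nat_mul_le v B) => n.
have hn : (n%:R : R) <= 2 ^+ n by rewrite -natrX ler_nat; apply: ltnW; exact: ltn_expl.
have h2 : 0 < (2 : R) ^+ n by apply: exprn_gt0.
have := h n; rewrite ler_pdivlMr // => h3.
by apply: le_trans h3; rewrite mulrC; apply: ler_wpM2l.
Qed.

(* The increments over a partition into N equal steps add up to at most C / N. *)
Lemma quadratic_increments_const (F : R -> R) C :
  (forall x x', 0 <= x -> x <= x' -> x' <= 1 -> `|F x' - F x| <= C * (x' - x) ^+ 2) ->
  F 1 = F 0.
Proof.
move=> h.
have C0 : 0 <= C.
  have := h 0 1 (lexx 0) ler01 (lexx 1); rewrite subr0 expr1n mulr1.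
  exact: le_trans (normr_ge0 _).
apply/eqP; rewrite -subr_eq0; apply/eqP; apply: (@eq0_of_nat_mul_le _ C) => -[|m].
  by rewrite mul0r.
set N : R := m.+1%:R.
have N0 : 0 < N by rewrite /N ltr0n.
have step k : (k <= m.+1)%N -> `|F (k%:R / N) - F 0| <= k%:R * (C / N ^+ 2).
  elim: k => [|k IH] hk; first by rewrite mul0r subrr normr0 mul0r.
  have kN : k.+1%:R <= N by rewrite /N ler_nat.
  have g1 : 0 <= k%:R / N by apply: divr_ge0; rewrite ?ler0n //; lra.
  have g2 : k%:R / N <= k.+1%:R / N by rewrite ler_pM2r ?invr_gt0 // ler_nat.
  have g3 : k.+1%:R / N <= 1 by rewrite ler_pdivrMr // mul1r.
  have h1 := h _ _ g1 g2 g3.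
  rewrite (_ : k.+1%:R / N - k%:R / N = N^-1) in h1; last by rewrite -natr1; field; lra.
  have -> : k.+1%:R * (C / N ^+ 2) = C * N^-1 ^+ 2 + k%:R * (C / N ^+ 2).
    by rewrite -natr1; field; lra.
  rewrite -[F _ - F 0](subrKA (F (k%:R / N))).
  by apply: le_trans (ler_normD _ _) _; apply: lerD => //; apply: IH; apply: ltnW.
have NN : N != 0 by lra.
have := step m.+1 (leqnn _); rewrite -/N divff // => hF.
rewrite (_ : N * (C / N ^+ 2) = C / N) in hF; last by field; rewrite addrC natr1.
by rewrite mulrC -ler_pdivlMr.
Qed.

Lemma norm_sub_mul_le (u1 v1 u2 v2 U V : R) :
  `|u1| <= U -> `|v1| <= V -> `|u2| <= U -> `|v2| <= V ->
  `|u1 * v1 - u2 * v2| <= 2 * (U * V).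
Proof.
move=> h1 h2 h3 h4.
apply: (le_trans (ler_normB _ _)); rewrite !normrM.
have : `|u1| * `|v1| <= U * V by apply: ler_pM.
have : `|u2| * `|v2| <= U * V by apply: ler_pM.
lra.
Qed.

End RealEstimates.

Section IntegralForm.
Context {R : realType}.
Local Notation mu := (@lebesgue_measure R).
Variables (a lam : R) (q : R -> R).
Hypothesis bq : bounded_measurable q.

Definition ode_rhs (y : R -> R) (t : R) : R := (q t - lam) / a * y t.

Definition integral_sol (y p : R -> R) :=
  [/\ bounded_measurable y, bounded_measurable p &
    forall x x', 0 <= x -> x <= x' -> x' <= 1 ->
      y x' - y x = Rintegral mu `]x, x'] p /\
      p x' - p x = Rintegral mu `]x, x'] (ode_rhs y)].

Lemma bounded_measurable_potential : bounded_measurable (fun t => (q t - lam) / a).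
Proof.
have -> : (fun t => (q t - lam) / a) = (fun t => a^-1 * q t + (- lam / a) * 1).
  by apply/funext => t; ring.
by apply: bounded_measurable_lin => //; exact: bounded_measurable_cst.
Qed.

Lemma bounded_measurable_ode_rhs y : bounded_measurable y ->
  bounded_measurable (ode_rhs y).
Proof. exact: bounded_measurableM bounded_measurable_potential. Qed.

Lemma is_sol_integral_sol y p : is_sol a q lam y p -> integral_sol y p.
Proof.
move=> [cy [cp hs]].
have by_ := continuous_bounded_measurable cy.
have bp := continuous_bounded_measurable cp.
split => // x x' h0 h1 h2.
have [e1 e2] := hs x ltac:(apply/andP; split; lra).
have [e3 e4] := hs x' ltac:(apply/andP; split; lra).
rewrite e1 e3 e2 e4 -(Rintegral0_itvB bp h0 h1 h2).
rewrite -(Rintegral0_itvB (bounded_measurable_ode_rhs by_) h0 h1 h2).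
by split; ring.
Qed.

Lemma ode_rhs_lin k1 k2 y1 y2 :
  ode_rhs (fun t => k1 * y1 t + k2 * y2 t) =
  (fun t => k1 * ode_rhs y1 t + k2 * ode_rhs y2 t).
Proof. by apply/funext => t; rewrite /ode_rhs; ring. Qed.

Lemma integral_sol_lin k1 k2 y1 p1 y2 p2 : integral_sol y1 p1 -> integral_sol y2 p2 ->
  integral_sol (fun t => k1 * y1 t + k2 * y2 t) (fun t => k1 * p1 t + k2 * p2 t).
Proof.
move=> [by1 bp1 h1] [by2 bp2 h2].
split; [exact: bounded_measurable_lin | exact: bounded_measurable_lin |].
move=> x x' h0 hxx h3.
have [e1 e2] := h1 x x' h0 hxx h3; have [e3 e4] := h2 x x' h0 hxx h3.
rewrite ode_rhs_lin !Rintegral_oc_lin //; last 2 first.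
- exact: bounded_measurable_ode_rhs.
- exact: bounded_measurable_ode_rhs.
by rewrite -e1 -e2 -e3 -e4; split; ring.
Qed.

Lemma is_sol_lin k1 k2 y1 p1 y2 p2 : is_sol a q lam y1 p1 -> is_sol a q lam y2 p2 ->
  is_sol a q lam (fun t => k1 * y1 t + k2 * y2 t) (fun t => k1 * p1 t + k2 * p2 t).
Proof.
move=> s1 s2.
have [by1 bp1 _] := is_sol_integral_sol s1.
have [by2 bp2 _] := is_sol_integral_sol s2.
move: s1 s2 => [cy1 [cp1 h1]] [cy2 [cp2 h2]].
have lin_cont (f g : R -> R) :
    {within `[0, 1], continuous f} -> {within `[0, 1], continuous g} ->
    {within `[0, 1], continuous (fun t => k1 * f t + k2 * g t)}.
  move=> cf cg x; apply: cvgD; apply: cvgM; by [exact: cvg_cst | exact: cf | exact: cg].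
split; first exact: lin_cont.
split; first exact: lin_cont.
move=> x hx.
have mD : measurable (`[0, x] : set (measurableTypeR R)) by exact: measurable_itv.
have sD : `[0, x] `<=` I01 by apply: itv_cc_sub01 => //; case/andP: hx.
have [e1 e2] := h1 x hx; have [e3 e4] := h2 x hx.
have -> : (fun t => (q t - lam) / a * (k1 * y1 t + k2 * y2 t)) =
    (fun t => k1 * ode_rhs y1 t + k2 * ode_rhs y2 t) by exact: ode_rhs_lin.
rewrite !Rintegral_lin //; last 2 first.
- exact: bounded_measurable_ode_rhs.
- exact: bounded_measurable_ode_rhs.
by rewrite e1 e2 e3 e4; split; ring.
Qed.

Lemma integral_sol_bound y p : integral_sol y p ->
  exists2 B, 0 <= B & forall t, 0 <= t <= 1 -> `|y t| <= B /\ `|p t| <= B.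
Proof.
move=> [[_ [By hy]] [_ [Bp hp]] _].
exists (By + Bp); first by have := bound_ge0 hy; have := bound_ge0 hp; lra.
move=> t ht; have := hy t ht; have := hp t ht.
have := bound_ge0 hy; have := bound_ge0 hp; split; lra.
Qed.

Lemma potential_bound :
  exists2 G, 0 <= G & forall t, 0 <= t <= 1 -> `|(q t - lam) / a| <= G.
Proof.
have [_ [G hG]] := bounded_measurable_potential.
by exists G => //; exact: bound_ge0 hG.
Qed.

Section Bounded.
Variables (B G : R).
Hypothesis hG : forall t, 0 <= t <= 1 -> `|(q t - lam) / a| <= G.

Lemma integral_sol_lipschitz y p : integral_sol y p ->
  (forall t, 0 <= t <= 1 -> `|y t| <= B /\ `|p t| <= B) ->
  forall x t, 0 <= x -> x <= t -> t <= 1 ->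
  `|y t - y x| <= (t - x) * B /\ `|p t - p x| <= (t - x) * (G * B).
Proof.
move=> [by_ bp hd] hB x t x0 xt t1.
have G0 := bound_ge0 hG.
have B0 : 0 <= B by apply: (bound_ge0 (f := y)) => ? /hB [].
have [-> ->] := hd x t x0 xt t1; split.
  apply: norm_Rintegral_oc_le => // s /andP[xs st].
  by have [] := hB s ltac:(apply/andP; split; lra).
apply: norm_Rintegral_oc_le => //; first exact: bounded_measurable_ode_rhs.
  exact: mulr_ge0.
move=> s /andP[xs st]; rewrite /ode_rhs normrM.
have hs : 0 <= s <= 1 by apply/andP; split; lra.
by apply: ler_pM => //; [exact: hG | case: (hB s hs)].
Qed.

Section Vanishing.
Variables (y p : R -> R).
Hypothesis sol : integral_sol y p.
Hypothesis hB : forall t, 0 <= t <= 1 -> `|y t| <= B /\ `|p t| <= B.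
Local Notation d := (2 * (G + 1))^-1.
Local Notation vanish_upto z := (forall s, 0 <= s -> s <= z -> y s = 0 /\ p s = 0).

(* On a step of length d, the integral equation contracts the sup norm by 1/2. *)
Lemma integral_sol_halving z : 0 <= z <= 1 -> vanish_upto z ->
  forall (n : nat) s, z < s -> s <= 1 -> s <= z + d ->
  `|y s| <= B / 2 ^+ n /\ `|p s| <= B / 2 ^+ n.
Proof.
move=> /andP[z0 z1] hz; case: sol => _ _ hd.
have B0 : 0 <= B by apply: (bound_ge0 (f := y)) => ? /hB [].
have G0 := bound_ge0 hG.
have d0 : 0 < d by rewrite invr_gt0; lra.
have contract X : 0 <= X -> d * X <= X / 2 /\ d * (G * X) <= X / 2.
  move=> X0; have : d * X * (2 * (G + 1)) = X by rewrite mulrAC mulVf ?mul1r //; lra.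
  have : 0 <= d * X by apply: mulr_ge0 => //; lra.
  by split; nra.
elim=> [|n IH] s zs s1 sd.
  by rewrite expr0 divr1; apply: hB; apply/andP; split; lra.
set E := B / 2 ^+ n.
have E0 : 0 <= E by apply: divr_ge0 => //; apply: exprn_ge0.
have -> : B / 2 ^+ n.+1 = E / 2.
  by rewrite /E exprS; field; apply: lt0r_neq0; apply: exprn_gt0.
have [zy zp] := hz z z0 (lexx z).
have [ey ep] := hd z s z0 (ltW zs) s1.
rewrite zy subr0 in ey; rewrite zp subr0 in ep; rewrite ey ep.
have IHs t : z < t <= s -> `|y t| <= E /\ `|p t| <= E.
  by case/andP => zt ts; apply: IH; lra.
have [cE cGE] := contract E E0.
have sz : s - z <= d by lra.
split.
  apply: le_trans (norm_Rintegral_oc_le _ _ _ _ E0 _) _ => //; first by case: sol.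
  - by lra.
  - by move=> t /IHs [].
  by apply: le_trans cE; apply: ler_wpM2r.
have GE0 : 0 <= G * E by apply: mulr_ge0.
apply: le_trans (norm_Rintegral_oc_le _ _ _ _ GE0 _) _ => //.
- by apply: bounded_measurable_ode_rhs; case: sol.
- by lra.
- move=> t tzs; have [i1 _] := IHs t tzs; move/andP: tzs => [zt ts].
  by rewrite /ode_rhs normrM; apply: ler_pM => //; apply: hG; apply/andP; split; lra.
by apply: le_trans cGE; apply: ler_wpM2r.
Qed.

Lemma integral_sol_vanish : y 0 = 0 -> p 0 = 0 ->
  forall x, 0 <= x <= 1 -> y x = 0 /\ p x = 0.
Proof.
move=> y0 p0.
have G0 := bound_ge0 hG.
have d0 : 0 < d by rewrite invr_gt0; lra.
have extend z : 0 <= z <= 1 -> vanish_upto z ->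
    forall s, z < s -> s <= 1 -> s <= z + d -> y s = 0 /\ p s = 0.
  move=> hz hz' s zs s1 sd.
  by split; apply: (eq0_of_le_div_exp2 (B := B)) => n;
    have [] := integral_sol_halving hz hz' n zs s1 sd.
have upto k : forall s, 0 <= s -> s <= 1 -> s <= k%:R * d -> y s = 0 /\ p s = 0.
  elim: k => [|k IH] s s0 s1 sk.
    by have -> : s = 0 by rewrite mul0r in sk; lra.
  case: (lerP s (k%:R * d)) => hk; first exact: IH.
  have k0 : 0 <= k%:R * d by apply: mulr_ge0 => //; lra.
  apply: (extend (k%:R * d)) => //.
  - by apply/andP; split; lra.
  - by move=> s' s'0 s'k; apply: IH => //; lra.
  - by move: sk; rewrite -natr1 mulrDl mul1r.
move=> x /andP[x0 x1].
have d1 : 0 <= d^-1 by rewrite invr_ge0; lra.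
have := archi_boundP d1; set k := Num.Def.archi_bound _ => hk.
apply: (upto k) => //.
have : d^-1 * d = 1 by rewrite mulVf //; lra.
nra.
Qed.

End Vanishing.
End Bounded.

Lemma integral_sol_eq0 y p : integral_sol y p -> y 0 = 0 -> p 0 = 0 ->
  forall x, 0 <= x <= 1 -> y x = 0 /\ p x = 0.
Proof.
move=> sol; have [B B0 hB] := integral_sol_bound sol.
have [G G0 hG] := potential_bound.
by move=> y0 p0 x; have := integral_sol_vanish hG sol hB y0 p0; apply.
Qed.

End IntegralForm.

Section Wronskian.
Context {R : realType}.
Local Notation mu := (@lebesgue_measure R).
Variables (a lam : R) (q : R -> R).
Hypothesis bq : bounded_measurable q.
Variables (B G : R) (y1 p1 y2 p2 : R -> R).
Hypothesis hG : forall t, 0 <= t <= 1 -> `|(q t - lam) / a| <= G.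
Hypotheses (sol1 : integral_sol a lam q y1 p1) (sol2 : integral_sol a lam q y2 p2).
Hypothesis hB1 : forall t, 0 <= t <= 1 -> `|y1 t| <= B /\ `|p1 t| <= B.
Hypothesis hB2 : forall t, 0 <= t <= 1 -> `|y2 t| <= B /\ `|p2 t| <= B.

Local Notation lip1 := (integral_sol_lipschitz bq hG sol1 hB1).
Local Notation lip2 := (integral_sol_lipschitz bq hG sol2 hB2).

Lemma wronskian_rhs_term_le x x' : 0 <= x -> x <= x' -> x' <= 1 ->
  `|y1 x * (p2 x' - p2 x) - y2 x * (p1 x' - p1 x)| <=
  (x' - x) * (G * (2 * (B * ((x' - x) * B)))).
Proof.
move=> x0 xx x1.
have G0 := bound_ge0 hG.
have B0 : 0 <= B by apply: (bound_ge0 (f := y1)) => ? /hB1 [].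
have [by1 _ hd1] := sol1; have [by2 _ hd2] := sol2.
have hx : 0 <= x <= 1 by apply/andP; split; lra.
have [_ e1] := hd1 x x' x0 xx x1; have [_ e2] := hd2 x x' x0 xx x1.
rewrite (_ : _ - _ = Rintegral mu `]x, x']
    (fun t => y1 x * ode_rhs a lam q y2 t + (- y2 x) * ode_rhs a lam q y1 t)); last first.
  by rewrite Rintegral_oc_lin ?e1 ?e2 //; [ring | exact: bounded_measurable_ode_rhs..].
apply: norm_Rintegral_oc_le => //.
- by apply: bounded_measurable_lin; apply: bounded_measurable_ode_rhs.
- have : 0 <= x' - x by lra.
  by move=> ?; do ?apply: mulr_ge0.
move=> t /andP[xt tx'].
have ht : 0 <= t <= 1 by apply/andP; split; lra.
rewrite /ode_rhs (_ : _ + _ =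
  (q t - lam) / a * (y1 x * (y2 t - y2 x) - y2 x * (y1 t - y1 x))); last by ring.
rewrite normrM; apply: ler_pM => //; first exact: hG.
have [l1 _] := lip1 x0 (ltW xt) (le_trans tx' x1).
have [l2 _] := lip2 x0 (ltW xt) (le_trans tx' x1).
apply: norm_sub_mul_le; [by case: (hB1 hx) | | by case: (hB2 hx) |].
- by apply: le_trans l2 _; apply: ler_wpM2r => //; lra.
- by apply: le_trans l1 _; apply: ler_wpM2r => //; lra.
Qed.

Lemma wronskian_der_term_le x x' : 0 <= x -> x <= x' -> x' <= 1 ->
  `|p2 x * (y1 x' - y1 x) - p1 x * (y2 x' - y2 x)| <=
  (x' - x) * (2 * (B * ((x' - x) * (G * B)))).
Proof.
move=> x0 xx x1.
have G0 := bound_ge0 hG.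
have B0 : 0 <= B by apply: (bound_ge0 (f := y1)) => ? /hB1 [].
have [_ bp1 hd1] := sol1; have [_ bp2 hd2] := sol2.
have hx : 0 <= x <= 1 by apply/andP; split; lra.
have [e1 _] := hd1 x x' x0 xx x1; have [e2 _] := hd2 x x' x0 xx x1.
rewrite (_ : _ - _ = Rintegral mu `]x, x'] (fun t => p2 x * p1 t + (- p1 x) * p2 t));
  last by rewrite Rintegral_oc_lin ?e1 ?e2 //; ring.
apply: norm_Rintegral_oc_le => //.
- exact: bounded_measurable_lin.
- have : 0 <= x' - x by lra.
  by move=> ?; do ?apply: mulr_ge0.
move=> t /andP[xt tx'].
rewrite (_ : _ + _ = p2 x * (p1 t - p1 x) - p1 x * (p2 t - p2 x)); last by ring.
have [_ l1] := lip1 x0 (ltW xt) (le_trans tx' x1).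
have [_ l2] := lip2 x0 (ltW xt) (le_trans tx' x1).
have GB0 : 0 <= G * B by apply: mulr_ge0.
apply: norm_sub_mul_le; [by case: (hB2 hx) | | by case: (hB1 hx) |].
- by apply: le_trans l1 _; apply: ler_wpM2r => //; lra.
- by apply: le_trans l2 _; apply: ler_wpM2r => //; lra.
Qed.

Lemma wronskian_increment_le x x' : 0 <= x -> x <= x' -> x' <= 1 ->
  `|(y1 x' * p2 x' - p1 x' * y2 x') - (y1 x * p2 x - p1 x * y2 x)| <=
  6 * G * B ^+ 2 * (x' - x) ^+ 2.
Proof.
move=> x0 xx x1.
set h := x' - x.
have T3 : `|(y1 x' - y1 x) * (p2 x' - p2 x) - (y2 x' - y2 x) * (p1 x' - p1 x)| <=
    2 * ((h * B) * (h * (G * B))).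
  have [l1 l2] := lip1 x0 xx x1; have [l3 l4] := lip2 x0 xx x1.
  exact: norm_sub_mul_le.
rewrite (_ : _ - _ =
    (y1 x * (p2 x' - p2 x) - y2 x * (p1 x' - p1 x)) +
    (p2 x * (y1 x' - y1 x) - p1 x * (y2 x' - y2 x)) +
    ((y1 x' - y1 x) * (p2 x' - p2 x) - (y2 x' - y2 x) * (p1 x' - p1 x))); last by ring.
rewrite (_ : 6 * G * B ^+ 2 * h ^+ 2 = h * (G * (2 * (B * (h * B)))) +
    h * (2 * (B * (h * (G * B)))) + 2 * ((h * B) * (h * (G * B)))); last by ring.
apply: le_trans (ler_normD _ _) _; apply: lerD => //.
apply: le_trans (ler_normD _ _) _; apply: lerD.
- exact: wronskian_rhs_term_le.
- exact: wronskian_der_term_le.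
Qed.

End Wronskian.

Lemma wronskian_const {R : realType} (a lam : R) q (y1 p1 y2 p2 : R -> R) :
  bounded_measurable q ->
  integral_sol a lam q y1 p1 -> integral_sol a lam q y2 p2 ->
  y1 1 * p2 1 - p1 1 * y2 1 = y1 0 * p2 0 - p1 0 * y2 0.
Proof.
move=> bq s1 s2.
have [B1 B10 hB1] := integral_sol_bound s1.
have [B2 B20 hB2] := integral_sol_bound s2.
have [G _ hG] := potential_bound a lam bq.
have widen (y p : R -> R) k : (forall t, 0 <= t <= 1 -> `|y t| <= k /\ `|p t| <= k) ->
    k <= B1 + B2 -> forall t, 0 <= t <= 1 -> `|y t| <= B1 + B2 /\ `|p t| <= B1 + B2.
  by move=> h hk t /h [? ?]; split; lra.
have hB1' := widen _ _ _ hB1 ltac:(lra).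
have hB2' := widen _ _ _ hB2 ltac:(lra).
apply: (quadratic_increments_const (F := fun t => y1 t * p2 t - p1 t * y2 t)
  (C := 6 * G * (B1 + B2) ^+ 2)).
move=> x x' x0 xx x1.
by have := wronskian_increment_le bq hG s1 s2 hB1' hB2' x0 xx x1; apply.
Qed.

Section Reflection.
Context {R : realType}.
Local Notation mu := (@lebesgue_measure R).

Definition reflect01 (t : measurableTypeR R) : measurableTypeR R := 1 - t.

Lemma measurable_reflect01 : measurable_fun setT reflect01.
Proof.
apply: continuous_measurable_fun => t.
by apply: cvgB; [exact: cvg_cst | exact: cvg_id].
Qed.

Definition reflected_lebesgue := pushforward mu reflect01.

Let reflected_lebesgue0 : reflected_lebesgue set0 = 0%E.
Proof. by rewrite /reflected_lebesgue /pushforward preimage_set0 measure0. Qed.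

Let reflected_lebesgue_ge0 A : (0 <= reflected_lebesgue A)%E.
Proof. by rewrite /reflected_lebesgue /pushforward; exact: measure_ge0. Qed.

Let reflected_lebesgue_sigma_additive : semi_sigma_additive reflected_lebesgue.
Proof.
move=> F mF tF mUF; rewrite /reflected_lebesgue /pushforward preimage_bigcup.
apply: measure_semi_sigma_additive.
- by move=> n; rewrite -[X in measurable X]setTI; exact: measurable_reflect01.
- apply/trivIsetP => /= i j _ _ ij; rewrite -preimage_setI.
  by move/trivIsetP : tF => /(_ _ _ _ _ ij) ->//; rewrite preimage_set0.
- by rewrite -preimage_bigcup -[X in measurable X]setTI; exact: measurable_reflect01.
Qed.

HB.instance Definition _ := isMeasure.Build _ _ _ reflected_lebesgue
  reflected_lebesgue0 reflected_lebesgue_ge0 reflected_lebesgue_sigma_additive.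

Lemma reflected_lebesgueE A : measurable A -> mu A = reflected_lebesgue A.
Proof.
apply: lebesgue_measure_unique => X [[u v] _ <-] /=.
rewrite /reflected_lebesgue /pushforward.
have -> : reflect01 @^-1` `]u, v]%classic = `[1 - v, 1 - u[%classic.
  apply/seteqP; split => t; rewrite /= /reflect01 !in_itv /= => /andP[h1 h2];
  by apply/andP; split; lra.
rewrite !lebesgue_measure_itv /= !lte_fin.
have -> : (1 - v < 1 - u) = (u < v) by apply/idP/idP; lra.
by case: ifP => // _; congr (EFin _); ring.
Qed.

Lemma bounded_measurable_reflect (f : R -> R) : bounded_measurable f ->
  bounded_measurable (fun t => f (1 - t)).
Proof.
move=> [mf [M hM]]; split; last by exists M => t ht; apply: hM; lra.
have mI : measurable (I01 : set R) by exact: measurable_itv.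
have hsub : reflect01 @` I01 `<=` I01.
  by move=> _ [t /I01P ht <-]; apply/I01P; rewrite /reflect01; lra.
have mp : measurable_fun I01 reflect01 by apply: measurable_funS measurable_reflect01.
exact: (measurable_comp mI hsub mf mp).
Qed.

Lemma Rintegral_reflect (f : R -> R) (x x' : R) : bounded_measurable f ->
  0 <= x -> x <= x' -> x' <= 1 ->
  Rintegral mu `]x, x'] (fun t => f (1 - t)) = Rintegral mu `]1 - x', 1 - x] f.
Proof.
move=> bf h0 h1 h2.
have br := bounded_measurable_reflect bf.
have mI : measurable (I01 : set (measurableTypeR R)) by exact: measurable_itv.
have inI t : x <= t < x' -> (t \in [set t | f (1 - t) = (f \_ I01) (1 - t)]).
  by move=> /andP[? ?]; rewrite inE /= patchE mem_set //; apply/I01P; lra.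
rewrite Rintegral_itv_obnd_cbnd; last first.
  by apply: bounded_measurable_integrable br _ _;
    [exact: measurable_itv | exact: itv_oc_sub01].
rewrite -Rintegral_itv_bndo_bndc; last first.
  by apply: bounded_measurable_integrable br _ _;
    [exact: measurable_itv | exact: itv_co_sub01].
rewrite /Rintegral; congr fine; symmetry.
set D : set (measurableTypeR R) := `]1 - x', 1 - x]%classic.
have mD : measurable D by exact: measurable_itv.
have DI : D `<=` I01 by apply: itv_oc_sub01; lra.
transitivity (\int[mu]_(t in D) ((f \_ I01) t)%:E)%E.
  by apply: eq_integral => t /[!inE] tD; rewrite patchE mem_set //; exact: DI.
transitivity (\int[reflected_lebesgue]_(t in D) ((f \_ I01) t)%:E)%E.
  by apply: eq_measure_integral => A mA _; exact: reflected_lebesgueE.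
have pre : reflect01 @^-1` D = `[x, x'[%classic.
  apply/seteqP; split => t; rewrite /D /= /reflect01 !in_itv /= => /andP[u1 u2];
  by apply/andP; split; lra.
have mf' : measurable_fun setT (EFin \o (f \_ I01)).
  by apply/measurable_EFinP; apply/(measurable_restrictT _ mI); case: bf.
have int' : mu.-integrable (reflect01 @^-1` D) ((EFin \o (f \_ I01)) \o reflect01).
  rewrite pre.
  have mxx : measurable (`[x, x'[%classic : set (measurableTypeR R)).
    exact: measurable_itv.
  apply: (eq_integrable mxx (EFin \o (fun t => f (1 - t)))).
  - by move=> t /[!inE]; rewrite /= in_itv /= => /inI; rewrite inE /= => ->.
  - by apply: bounded_measurable_integrable br _ _;
      [exact: measurable_itv | exact: itv_co_sub01].
rewrite (integral_pushforward measurable_reflect01 mf' int' mD) pre.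
by apply: eq_integral => t /[!inE]; rewrite /= in_itv /= => /inI; rewrite inE /= => ->.
Qed.

End Reflection.

Section Monodromy.
Context {R : realType}.
Local Notation mu := (@lebesgue_measure R).
Variables (a lam : R) (q : R -> R).
Hypothesis bq : bounded_measurable q.

Lemma integral_sol_reflect y p :
  (forall t, 0 <= t <= 1 -> q t = q (1 - t)) -> integral_sol a lam q y p ->
  integral_sol a lam q (fun t => y (1 - t)) (fun t => - p (1 - t)).
Proof.
move=> qsym [by_ bp hd].
have opp (f : R -> R) : (fun t => - f (1 - t)) = (fun t => -1 * f (1 - t) + 0 * f (1 - t)).
  by apply/funext => t; ring.
have bp' := bounded_measurable_reflect bp.
split; [exact: bounded_measurable_reflect | by rewrite opp; exact: bounded_measurable_lin |].
move=> x x' h0 h1 h2.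
have [e1 e2] := hd (1 - x') (1 - x) ltac:(lra) ltac:(lra) ltac:(lra).
split; first by rewrite opp Rintegral_oc_lin // Rintegral_reflect // -e1; ring.
have E t : t \in (`]x, x']%classic : set (measurableTypeR R)) ->
    ode_rhs a lam q (fun t => y (1 - t)) t = ode_rhs a lam q y (1 - t).
  by move=> /[!inE] tD; rewrite /ode_rhs qsym //; apply/I01P; exact: itv_oc_sub01 tD.
rewrite (eq_Rintegral _ E) Rintegral_reflect // -?e2; first ring.
exact: bounded_measurable_ode_rhs.
Qed.

Lemma integral_sol_y_eq0 y p : integral_sol a lam q y p ->
  (forall x, 0 <= x <= 1 -> y x = 0) -> p 0 = 0.
Proof.
move=> [_ _ hd] y0.
have p_cst x : 0 < x <= 1 -> p x = p 0.
  move=> /andP[x0 x1]; have [_ e] := hd 0 x (lexx 0) (ltW x0) x1.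
  apply/eqP; rewrite -subr_eq0 e; apply/eqP.
  rewrite (@eq_Rintegral _ _ _ mu _ (fun=> 0)).
    by rewrite Rintegral_cst ?mul0r //; exact: measurable_itv.
  move=> t /[!inE]; rewrite /= in_itv /= => /andP[t0 t1].
  by rewrite /ode_rhs y0 ?mulr0 //; apply/andP; split; lra.
have [e _] := hd 0 1 (lexx 0) ler01 (lexx 1).
rewrite !y0 ?lexx ?ler01 // subrr (@eq_Rintegral _ _ _ mu _ (fun=> p 0)) in e.
  by move: e; rewrite Rintegral_cst ?lebesgue_measure_itv_oc ?subr0 ?mulr1 //;
    exact: measurable_itv.
move=> t /[!inE]; rewrite /= in_itv /= => ht; exact: p_cst.
Qed.

Section FundamentalSystem.
Variables (c cp s sp : R -> R).
Hypotheses (sc : integral_sol a lam q c cp) (ss : integral_sol a lam q s sp).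
Hypotheses (c0 : c 0 = 1) (cp0 : cp 0 = 0) (s0 : s 0 = 0) (sp0 : sp 0 = 1).

Lemma integral_sol_decomp y p : integral_sol a lam q y p -> forall x, 0 <= x <= 1 ->
  y x = y 0 * c x + p 0 * s x /\ p x = y 0 * cp x + p 0 * sp x.
Proof.
move=> sy x hx.
have sz := integral_sol_lin bq 1 (-1) sy (integral_sol_lin bq (y 0) (p 0) sc ss).
have [] := integral_sol_eq0 bq sz _ _ hx; rewrite /= ?c0 ?s0 ?cp0 ?sp0; try ring.
by move=> h1 h2; split; lra.
Qed.

Lemma monodromy_det : c 1 * sp 1 - cp 1 * s 1 = 1.
Proof. by rewrite (wronskian_const bq sc ss) c0 cp0 s0 sp0; ring. Qed.

Hypothesis qsym : forall t, 0 <= t <= 1 -> q t = q (1 - t).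

(* Running c and s backwards gives M^-1 = J M J with J = diag(1, -1); with
   det M = 1 this forces the two diagonal entries of M to agree. *)
Lemma monodromy_diag : sp 1 = c 1.
Proof.
have h01 : 0 <= (1 : R) <= 1 by rewrite ler01 lexx.
have [A _] := integral_sol_decomp (integral_sol_reflect qsym sc) h01.
have [_ B] := integral_sol_decomp (integral_sol_reflect qsym ss) h01.
rewrite /= subrr subr0 c0 in A; rewrite /= subrr subr0 sp0 in B.
have : (c 1 - sp 1) ^+ 2 = 0.
  have -> : (c 1 - sp 1) ^+ 2 = (c 1 * c 1 + - cp 1 * s 1 - 1)
      - 2 * (c 1 * sp 1 - cp 1 * s 1 - 1) + (sp 1 * sp 1 - s 1 * cp 1 - 1) by ring.
  rewrite -A monodromy_det (_ : sp 1 * sp 1 - s 1 * cp 1 - 1 =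
    - 1 - (s 1 * cp 1 + - sp 1 * sp 1)); last by ring.
  by rewrite -B; ring.
by move/eqP; rewrite sqrf_eq0 subr_eq0 => /eqP ->.
Qed.

End FundamentalSystem.
End Monodromy.

Section ComplexSolutions.
Context {R : realType}.
Variables (a lam : R) (q : R -> R).
Hypothesis bq : bounded_measurable q.
Variables (c cp s sp : R -> R).
Hypotheses (hc : is_sol a q lam c cp) (hs : is_sol a q lam s sp).
Hypotheses (c0 : c 0 = 1) (cp0 : cp 0 = 0) (s0 : s 0 = 0) (sp0 : sp 0 = 1).

Lemma D0_neq0 (rho : R) : ~ in_Sigma0 a rho q lam ->
  (s 1 + rho * sp 1) + rho * (c 1 + rho * cp 1) != 0.
Proof.
move=> nS; apply/eqP => hD; apply: nS.
have sy := is_sol_lin bq rho 1 hc hs.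
exists (fun t => rho * c t + 1 * s t), (fun t => rho * cp t + 1 * sp t).
split=> //; rewrite c0 s0 cp0 sp0; split; first ring.
split; first by rewrite -hD; ring.
apply: contrapT => y_eq0.
have := integral_sol_y_eq0 (is_sol_integral_sol bq sy).
rewrite cp0 sp0 mulr0 mulr1 add0r => p0.
suff /eqP : (1 : R) = 0 by rewrite oner_eq0.
apply: p0 => x hx.
by apply/eqP/negPn/negP => yx; apply: y_eq0; exists x.
Qed.

Lemma complex_ext (z w : R[i]) :
  complex.Re z = complex.Re w -> complex.Im z = complex.Im w -> z = w.
Proof. by case: z => ? ?; case: w => ? ? /= -> ->. Qed.

Lemma is_csol_comb (al be : R[i]) :
  is_csol a q lam (fun x => al * (c x)%:C + be * (s x)%:C)%C
                  (fun x => al * (cp x)%:C + be * (sp x)%:C)%C.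
Proof.
split.
  have := is_sol_lin bq (complex.Re al) (complex.Re be) hc hs.
  by congr is_sol; apply/funext => t; case: al => ? ?; case: be => ? ? /=; ring.
have := is_sol_lin bq (complex.Im al) (complex.Im be) hc hs.
by congr is_sol; apply/funext => t; case: al => ? ?; case: be => ? ? /=; ring.
Qed.

Lemma csol_decomp (u up : R -> R[i]) : is_csol a q lam u up ->
  forall x, 0 <= x <= 1 ->
  u x = (u 0 * (c x)%:C + up 0 * (s x)%:C)%C /\
  up x = (u 0 * (cp x)%:C + up 0 * (sp x)%:C)%C.
Proof.
move=> [h1 h2] x hx.
have dc := is_sol_integral_sol bq hc; have ds := is_sol_integral_sol bq hs.
have [r1 r2] := integral_sol_decomp bq dc ds c0 cp0 s0 sp0 (is_sol_integral_sol bq h1) hx.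
have [i1 i2] := integral_sol_decomp bq dc ds c0 cp0 s0 sp0 (is_sol_integral_sol bq h2) hx.
by split; apply: complex_ext; rewrite ?r1 ?i1 ?r2 ?i2;
  case: (u 0) => ? ?; case: (up 0) => ? ? /=; ring.
Qed.

End ComplexSolutions.

Section Phases.
Context {R : realType}.

Lemma expiN (t : R) : expi t * expi (- t) = 1.
Proof.
rewrite /expi cosN sinN; apply: complex_ext => /=; last by ring.
by rewrite -(cos2Dsin2 t); ring.
Qed.

Lemma expi_neq0 (t : R) : expi t != 0.
Proof.
by apply/eqP => e0; have := expiN t; rewrite e0 mul0r => /eqP; rewrite eq_sym oner_eq0.
Qed.

Lemma expiV (t : R) : (expi t)^-1 = expi (- t).
Proof. by apply: (mulfI (expi_neq0 t)); rewrite mulfV ?expi_neq0 ?expiN. Qed.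

Lemma Sfun_mul_conj (th1 th2 : R) :
  Sfun th1 th2 * (1 + expi th1 + expi th2) = ((Normc.normc (Sfun th1 th2)) ^+ 2)%:C%C.
Proof.
rewrite /Sfun /expi !cosN !sinN /= sqr_sqrtr; last by rewrite addr_ge0 // sqr_ge0.
by apply: complex_ext => /=; ring.
Qed.

End Phases.

Lemma eq_iff_scaled (F : idomainType) (k x y x' y' : F) :
  k != 0 -> x - y = k * (x' - y') -> (x = y <-> x' = y').
Proof.
move=> k0 e; split=> h; move/eqP: e; rewrite h subrr.
  by rewrite eq_sym mulf_eq0 (negbTE k0) subr_eq0 => /eqP.
by rewrite mulr0 subr_eq0 => /eqP.
Qed.

Lemma pair_system_nontrivial (F : idomainType) (A S Sb K : F) : A != 0 ->
  (exists w0 w1 : F, ((w0 != 0) || (w1 != 0)) /\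
     A * S * w1 = K * w0 /\ A * Sb * w0 = K * w1) <->
  K ^+ 2 = A ^+ 2 * (S * Sb).
Proof.
move=> A0; split=> [[w0 [w1 [nz [e1 e2]]]] | hK].
  have E0 : (K ^+ 2 - A ^+ 2 * (S * Sb)) * w0 =
      K * (K * w0 - A * S * w1) + A * S * (K * w1 - A * Sb * w0) by ring.
  have E1 : (K ^+ 2 - A ^+ 2 * (S * Sb)) * w1 =
      K * (K * w1 - A * Sb * w0) + A * Sb * (K * w0 - A * S * w1) by ring.
  rewrite e1 e2 !subrr !mulr0 addr0 in E0 E1.
  apply/eqP; rewrite -subr_eq0.
  by case/orP: nz => nz; [move/eqP: E0 | move/eqP: E1];
    rewrite mulf_eq0 (negbTE nz) orbF.
have [K0|K0] := eqVneq K 0; last first.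
  exists (A * S), K; rewrite K0 orbT; split=> //; split; first ring.
  by transitivity (A ^+ 2 * (S * Sb)); [ring | rewrite -hK; ring].
have : (S == 0) || (Sb == 0).
  by move/eqP: hK; rewrite K0 expr0n /= eq_sym !mulf_eq0 (negbTE A0).
by case/orP => /eqP z; [exists 0, 1 | exists 1, 0]; rewrite z K0 oner_neq0 ?orbT;
  split=> //; split; ring.
Qed.

Section VertexSystem.
Variable F : fieldType.
Variables (r c1 cp1 s1 A L : F).

Local Notation D1 := (c1 + r * cp1).
Local Notation D0 := ((s1 + r * c1) + r * D1).
Local Notation K := (3 * A * D1 - L * D0).
Local Notation val1 al be := (al * c1 + be * s1).
Local Notation der1 al be := (al * cp1 + be * c1).
Local Notation beta e w0 w1 := ((e^-1 * w1 - w0 * D1) / D0).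

(* Edge j carries the solution al_j c + be_j s, whose value and derivative at
   the far end are val1 and der1 for a monodromy matrix [[c1, s1], [cp1, c1]];
   e_j is its Floquet phase and w0, w1 are the values at the two vertices. *)
Definition vertex_system (e1 e2 e3 al1 al2 al3 be1 be2 be3 w0 w1 : F) : Prop :=
  [/\ al1 - r * be1 = w0, al2 - r * be2 = w0 & al3 - r * be3 = w0] /\
  - A * (be1 + be2 + be3) = L * w0 /\
  [/\ e1 * (val1 al1 be1 + r * der1 al1 be1) = w1,
      e2 * (val1 al2 be2 + r * der1 al2 be2) = w1
    & e3 * (val1 al3 be3 + r * der1 al3 be3) = w1] /\
  A * (e1 * der1 al1 be1 + e2 * der1 al2 be2 + e3 * der1 al3 be3) = L * w1.

Lemma edge_robinE e w0 w1 al be : e != 0 -> D0 != 0 ->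
  (al - r * be = w0 /\ e * (val1 al be + r * der1 al be) = w1) <->
  (be = beta e w0 w1 /\ al = w0 + r * be).
Proof.
move=> e0 D00; split; first by move=> [<- <-]; split; [field; rewrite D00 e0 | ring].
by move=> [hb ->]; split; [ring | rewrite hb; field; rewrite D00 e0].
Qed.

Lemma kirchhoff0E e1 e2 e3 w0 w1 : e1 != 0 -> e2 != 0 -> e3 != 0 -> D0 != 0 ->
  - A * (beta e1 w0 w1 + beta e2 w0 w1 + beta e3 w0 w1) = L * w0 <->
  A * (e1^-1 + e2^-1 + e3^-1) * w1 = K * w0.
Proof.
move=> e10 e20 e30 D00; apply: (@eq_iff_scaled _ (- D0^-1)).
  by rewrite oppr_eq0 invr_eq0.
by field; rewrite e10 e20 e30 D00.
Qed.

Lemma kirchhoff1E e1 e2 e3 w0 w1 : e1 != 0 -> e2 != 0 -> e3 != 0 -> D0 != 0 ->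
  c1 * c1 - cp1 * s1 = 1 ->
  A * (e1 * der1 (w0 + r * beta e1 w0 w1) (beta e1 w0 w1) +
       e2 * der1 (w0 + r * beta e2 w0 w1) (beta e2 w0 w1) +
       e3 * der1 (w0 + r * beta e3 w0 w1) (beta e3 w0 w1)) = L * w1 <->
  A * (e1 + e2 + e3) * w0 = K * w1.
Proof.
move=> e10 e20 e30 D00 W.
have W0 : cp1 * D0 - D1 ^+ 2 + 1 = 0.
  by rewrite -[X in _ + X]W; ring.
apply: (@eq_iff_scaled _ (- D0^-1)); first by rewrite oppr_eq0 invr_eq0.
transitivity (- D0^-1 * (A * (e1 + e2 + e3) * w0 - K * w1) +
  A * (e1 + e2 + e3) * w0 / D0 * (cp1 * D0 - D1 ^+ 2 + 1)).
  by field; rewrite e10 e20 e30 D00.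
by rewrite W0 mulr0 addr0.
Qed.

Lemma vertex_system_trivial e1 e2 e3 al1 al2 al3 be1 be2 be3 :
  e1 != 0 -> e2 != 0 -> e3 != 0 -> D0 != 0 ->
  vertex_system e1 e2 e3 al1 al2 al3 be1 be2 be3 0 0 ->
  [/\ al1 = 0 /\ be1 = 0, al2 = 0 /\ be2 = 0 & al3 = 0 /\ be3 = 0].
Proof.
move=> e10 e20 e30 D00 [[h1 h2 h3] [_ [[k1 k2 k3] _]]].
have edge0 e al be : e != 0 -> al - r * be = 0 ->
    e * (val1 al be + r * der1 al be) = 0 -> al = 0 /\ be = 0.
  move=> e0 h k; have [-> ->] := (edge_robinE 0 0 al be e0 D00).1 (conj h k).
  by split; rewrite mulr0 mul0r subrr mul0r ?mulr0 ?addr0.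
by split; [apply: (edge0 e1) | apply: (edge0 e2) | apply: (edge0 e3)].
Qed.

Theorem vertex_system_solvable e1 e2 e3 :
  A != 0 -> D0 != 0 -> e1 != 0 -> e2 != 0 -> e3 != 0 -> c1 * c1 - cp1 * s1 = 1 ->
  (exists al1 al2 al3 be1 be2 be3 w0 w1, ((w0 != 0) || (w1 != 0)) /\
     vertex_system e1 e2 e3 al1 al2 al3 be1 be2 be3 w0 w1) <->
  K ^+ 2 = A ^+ 2 * ((e1^-1 + e2^-1 + e3^-1) * (e1 + e2 + e3)).
Proof.
move=> A0 D00 e10 e20 e30 W; rewrite -pair_system_nontrivial //.
have edge e w0 w1 al be (e0 : e != 0) := edge_robinE w0 w1 al be e0 D00.
split.
  move=> [al1 [al2 [al3 [be1 [be2 [be3 [w0 [w1 [nz H]]]]]]]]].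
  move: H => [[h01 h02 h03] [k0 [[h11 h12 h13] k1]]].
  have [b1 a1] := (edge _ _ _ _ _ e10).1 (conj h01 h11).
  have [b2 a2] := (edge _ _ _ _ _ e20).1 (conj h02 h12).
  have [b3 a3] := (edge _ _ _ _ _ e30).1 (conj h03 h13).
  exists w0, w1; split=> //; split.
    by apply/kirchhoff0E; rewrite // -b1 -b2 -b3.
  by rewrite a1 a2 a3 b1 b2 b3 in k1; apply/kirchhoff1E.
move=> [w0 [w1 [nz [E0 E1]]]].
exists (w0 + r * beta e1 w0 w1), (w0 + r * beta e2 w0 w1), (w0 + r * beta e3 w0 w1).
exists (beta e1 w0 w1), (beta e2 w0 w1), (beta e3 w0 w1), w0, w1; split=> //.
have [h01 h11] := (edge _ w0 w1 _ _ e10).2 (conj erefl erefl).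
have [h02 h12] := (edge _ w0 w1 _ _ e20).2 (conj erefl erefl).
have [h03 h13] := (edge _ w0 w1 _ _ e30).2 (conj erefl erefl).
split; first by [].
split; first exact/kirchhoff0E.
by split; [ | exact/kirchhoff1E].
Qed.

End VertexSystem.

Section SpectralCondition.
Local Open Scope complex_scope.
Context {R : realType}.
Variables (a rho m lam : R) (q : R -> R).
Hypothesis bq : bounded_measurable q.
Variables (c cp s sp : R -> R).
Hypotheses (hc : is_sol a q lam c cp) (hs : is_sol a q lam s sp).
Hypotheses (c0 : c 0 = 1) (cp0 : cp 0 = 0) (s0 : s 0 = 0) (sp0 : sp 0 = 1).
Hypothesis sp1 : sp 1 = c 1.
Hypothesis D0_neq0 : (s 1 + rho * sp 1) + rho * (c 1 + rho * cp 1) != 0.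

Lemma complex_D0_neq0 :
  ((s 1)%:C + rho%:C * (c 1)%:C) + rho%:C * ((c 1)%:C + rho%:C * (cp 1)%:C) != 0 :> R[i].
Proof.
have -> : ((s 1)%:C + rho%:C * (c 1)%:C) + rho%:C * ((c 1)%:C + rho%:C * (cp 1)%:C) =
    ((s 1 + rho * c 1) + rho * (c 1 + rho * cp 1))%:C by apply: complex_ext => /=; ring.
by apply/eqP => -[] /eqP; move: D0_neq0; rewrite sp1 => /negbTE ->.
Qed.

Lemma in_spec_Theta_vertex_system th1 th2 :
  in_spec_Theta a rho m q lam th1 th2 <->
  exists al1 al2 al3 be1 be2 be3 w0 w1 : R[i], ((w0 != 0) || (w1 != 0)) /\
    vertex_system rho%:C (c 1)%:C (cp 1)%:C (s 1)%:C a%:C (lam * m)%:C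
      1 (expi th1) (expi th2) al1 al2 al3 be1 be2 be3 w0 w1.
Proof.
have h11 : 0 <= (1 : R) <= 1 by rewrite ler01 lexx.
split.
  move=> [u1 [p1 [u2 [p2 [u3 [p3 [w0 [w1 [[cs1 cs2 cs3] [nt [H0 [k0 [H1 k1]]]]]]]]]]]]].
  move: H0 H1 => [h01 h02 h03] [h11' h12 h13].
  have [U1 P1] := csol_decomp bq hc hs c0 cp0 s0 sp0 cs1 h11.
  have [U2 P2] := csol_decomp bq hc hs c0 cp0 s0 sp0 cs2 h11.
  have [U3 P3] := csol_decomp bq hc hs c0 cp0 s0 sp0 cs3 h11.
  rewrite sp1 in P1 P2 P3.
  have VS : vertex_system rho%:C (c 1)%:C (cp 1)%:C (s 1)%:C a%:C (lam * m)%:C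
      1 (expi th1) (expi th2) (u1 0) (u2 0) (u3 0) (p1 0) (p2 0) (p3 0) w0 w1.
    split; first by split.
    split; first exact: k0.
    split; last by rewrite mul1r -k1 P1 P2 P3.
    by split; [rewrite mul1r -h11' | rewrite -h12 | rewrite -h13];
      rewrite ?U1 ?P1 ?U2 ?P2 ?U3 ?P3.
  exists (u1 0), (u2 0), (u3 0), (p1 0), (p2 0), (p3 0), w0, w1; split=> //.
  have [w00|//] := eqVneq w0 0; have [w10|//] := eqVneq w1 0.
  exfalso; apply: nt; split=> //; rewrite w00 w10 in VS.
  have [[a1 b1] [a2 b2] [a3 b3]] :=
    vertex_system_trivial (oner_neq0 _) (expi_neq0 th1) (expi_neq0 th2) complex_D0_neq0 VS.
  move=> x hx.
  have [V1 _] := csol_decomp bq hc hs c0 cp0 s0 sp0 cs1 hx.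
  have [V2 _] := csol_decomp bq hc hs c0 cp0 s0 sp0 cs2 hx.
  have [V3 _] := csol_decomp bq hc hs c0 cp0 s0 sp0 cs3 hx.
  by rewrite V1 V2 V3 a1 a2 a3 b1 b2 b3 !mul0r addr0.
move=> [al1 [al2 [al3 [be1 [be2 [be3 [w0 [w1 [nz H]]]]]]]]].
move: H => [[h01 h02 h03] [k0 [[h11' h12 h13] k1]]].
have at0 (al be : R[i]) : (al * (c 0)%:C + be * (s 0)%:C = al)%C.
  by rewrite c0 s0 rmorph1 rmorph0 mulr1 mulr0 addr0.
have der0 (al be : R[i]) : (al * (cp 0)%:C + be * (sp 0)%:C = be)%C.
  by rewrite cp0 sp0 rmorph1 rmorph0 mulr1 mulr0 add0r.
exists (fun x => al1 * (c x)%:C + be1 * (s x)%:C)%C,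
  (fun x => al1 * (cp x)%:C + be1 * (sp x)%:C)%C.
exists (fun x => al2 * (c x)%:C + be2 * (s x)%:C)%C,
  (fun x => al2 * (cp x)%:C + be2 * (sp x)%:C)%C.
exists (fun x => al3 * (c x)%:C + be3 * (s x)%:C)%C,
  (fun x => al3 * (cp x)%:C + be3 * (sp x)%:C)%C.
exists w0, w1; rewrite /= !at0 !der0 sp1.
split; first by split; exact: is_csol_comb.
split; first by move=> [_ [w00 w10]]; rewrite w00 w10 eqxx in nz.
do 2 split=> //.
by split; [split; [rewrite -h11' mul1r | rewrite -h12 | rewrite -h13] | rewrite -k1 mul1r].
Qed.

Hypothesis a_gt0 : 0 < a.
Hypothesis det : c 1 * c 1 - cp 1 * s 1 = 1.

Lemma in_spec_ThetaE th1 th2 :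
  in_spec_Theta a rho m q lam th1 th2 <->
  (c 1 + rho * cp 1) - lam * m / (3 * a) * ((s 1 + rho * sp 1) + rho * (c 1 + rho * cp 1))
    = Normc.normc (Sfun th1 th2) / 3 \/
  (c 1 + rho * cp 1) - lam * m / (3 * a) * ((s 1 + rho * sp 1) + rho * (c 1 + rho * cp 1))
    = - (Normc.normc (Sfun th1 th2) / 3).
Proof.
have a_neq0 : a != 0 := lt0r_neq0 a_gt0.
have aC : a%:C != 0 :> R[i] by apply/eqP => -[] /eqP; rewrite (negbTE a_neq0).
have detC : (c 1)%:C * (c 1)%:C - (cp 1)%:C * (s 1)%:C = 1 :> R[i].
  by apply: complex_ext => /=; [rewrite !mul0r !subr0 | ring].
rewrite in_spec_Theta_vertex_system (vertex_system_solvable (lam * m)%:C aC complex_D0_neq0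
  (oner_neq0 _) (expi_neq0 th1) (expi_neq0 th2) detC).
rewrite invr1 !expiV (_ : 1 + expi (- th1) + expi (- th2) = Sfun th1 th2) //.
rewrite Sfun_mul_conj sp1; set N := Normc.normc _; set X := c 1 + rho * cp 1 - _.
set Kr := 3 * a * (c 1 + rho * cp 1) -
  lam * m * ((s 1 + rho * c 1) + rho * (c 1 + rho * cp 1)).
have -> : 3 * a%:C * ((c 1)%:C + rho%:C * (cp 1)%:C) - (lam * m)%:C *
    (((s 1)%:C + rho%:C * (c 1)%:C) + rho%:C * ((c 1)%:C + rho%:C * (cp 1)%:C)) = Kr%:C.
  by apply: complex_ext => /=; rewrite /Kr; ring.
rewrite -rmorphXn -[a%:C ^+ 2]rmorphXn -rmorphM.
transitivity (Kr ^+ 2 = (a * N) ^+ 2); first by rewrite exprMn; split=> [[] | ->].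
have a3 : 3 * a != 0 by rewrite mulf_neq0 // pnatr_eq0.
rewrite -(@eq_iff_scaled _ (3 * a) Kr (a * N) X (N / 3)) //; last first.
  by rewrite /Kr /X; field.
rewrite -(@eq_iff_scaled _ (3 * a) Kr (- (a * N)) X (- (N / 3))) //; last first.
  by rewrite /Kr /X; field.
split=> [/eqP | [] ->] //; last by rewrite sqrrN.
by rewrite eqf_sqr => /orP[] /eqP; [left | right].
Qed.

End SpectralCondition.

Theorem mainTheorem2 (R : realType) (a kinv m : R) (q0 : R -> R) :
  0 < a -> 0 <= kinv -> 0 <= m ->
  measurable_fun (`[0, 1] : set R) q0 ->
  (exists M : R, forall x : R, 0 <= x <= 1 -> `|q0 x| <= M) ->
  (forall x : R, 0 <= x <= 1 -> q0 x = q0 (1 - x)) ->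
  forall lam : R, ~ in_Sigma0 a (a * kinv) q0 lam ->
  forall c cp s sp : R -> R,
    is_sol a q0 lam c cp -> c 0 = 1 -> cp 0 = 0 ->
    is_sol a q0 lam s sp -> s 0 = 0 -> sp 0 = 1 ->
  let rho := a * kinv in
  let D1 := c 1 + rho * cp 1 in
  let D2 := s 1 + rho * sp 1 in
  let D0 := D2 + rho * D1 in
  (in_spec a rho m q0 lam <->
   exists th1 th2 : R, -pi <= th1 <= pi /\ -pi <= th2 <= pi /\
     (D1 - lam * m / (3 * a) * D0 = Normc.normc (Sfun th1 th2) / 3 \/
      D1 - lam * m / (3 * a) * D0 = - (Normc.normc (Sfun th1 th2) / 3))).
Proof.
move=> a_gt0 _ _ mq bq0 qsym lam nS c cp s sp hc c0 cp0 hs s0 sp0 rho D1 D2 D0.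
have bq : bounded_measurable q0 by split.
have sc := is_sol_integral_sol bq hc; have ss := is_sol_integral_sol bq hs.
have sp1 := monodromy_diag bq sc ss c0 cp0 s0 sp0 qsym.
have det : c 1 * c 1 - cp 1 * s 1 = 1.
  by have := monodromy_det bq sc ss c0 cp0 s0 sp0; rewrite sp1.
have hTheta := in_spec_ThetaE m bq hc hs c0 cp0 s0 sp0 sp1
  (D0_neq0 bq hc hs c0 cp0 s0 sp0 nS) a_gt0 det.
by split=> -[th1 [th2 [h1 [h2 H]]]]; exists th1, th2; do 2 split=> //; apply/hTheta.
Qed.
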